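(* Let $\mathcal{E}$ be an elementary topos with subobject classifier $\Omega$, let $\circledcirc:\Omega\to\Omega$ be a strong Löb operator, and let $f:X\to X$ be $\circledcirc$-contractive. Then $f$ is non-expansive, and hence its subobject of fixed points is a maximal subterminal one, i.e. $\mathcal{E}\models \mathsf{MaxST}(\lambda x{:}X.(x\approx f x))$.
   Context: Statements are in the internal (Mitchell–Bénabou) language of $\mathcal{E}$; $\mathcal{E}\models\phi$ means the closed formula $\phi$ is interpreted as $\mathrm{true}:1\to\Omega$. $\circledcirc$ is a strong Löb operator if $\mathcal{E}\models\forall p{:}\Omega.((\circledcirc p\Rightarrow p)\Rightarrow p)$. $f$ is $\circledcirc$-contractive if $\mathcal{E}\models\forall x,y{:}X.(\circledcirc(x\approx y)\Rightarrow f x\approx f y)$. $f$ is non-expansive if $\mathcal{E}\models\forall x,y{:}X.((f x\approx f y\Rightarrow x\approx y)\Rightarrow x\approx y)$. For $\phi:\Omega^X$: $\mathsf{SubTe}(\phi):=\forall x,y{:}X.(\phi(x)\wedge\phi(y)\Rightarrow x\approx y)$; $\phi\subseteq\psi:=\forall x{:}X.(\phi(x)\Rightarrow\psi(x))$; $\mathsf{MaxST}(\phi):=\mathsf{SubTe}(\phi)\wedge\forall\alpha{:}\Omega^X.(\mathsf{SubTe}(\alpha)\wedge\phi\subseteq\alpha\Rightarrow\alpha\subseteq\phi)$. *)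

Set Implicit Arguments.
Unset Strict Implicit.

Record Topos := {
  Ob : Type;
  Hom : Ob -> Ob -> Type;
  idm : forall A, Hom A A;
  comp : forall A B C, Hom B C -> Hom A B -> Hom A C;
  comp_assoc : forall A B C D (h : Hom C D) (g : Hom B C) (f : Hom A B),
      comp h (comp g f) = comp (comp h g) f;
  comp_idl : forall A B (f : Hom A B), comp (idm B) f = f;
  comp_idr : forall A B (f : Hom A B), comp f (idm A) = f;
  One : Ob;
  bang : forall A, Hom A One;
  bang_uniq : forall A (f g : Hom A One), f = g;
  Prod : Ob -> Ob -> Ob;
  p1 : forall A B, Hom (Prod A B) A;
  p2 : forall A B, Hom (Prod A B) B;
  pair : forall C A B, Hom C A -> Hom C B -> Hom C (Prod A B);
  pair_p1 : forall C A B (f : Hom C A) (g : Hom C B), comp (p1 A B) (pair f g) = f;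
  pair_p2 : forall C A B (f : Hom C A) (g : Hom C B), comp (p2 A B) (pair f g) = g;
  pair_uniq : forall C A B (h : Hom C (Prod A B)),
      pair (comp (p1 A B) h) (comp (p2 A B) h) = h;
  Eqz : forall A B, Hom A B -> Hom A B -> Ob;
  eqm : forall A B (f g : Hom A B), Hom (Eqz f g) A;
  eqm_comm : forall A B (f g : Hom A B), comp f (eqm f g) = comp g (eqm f g);
  eqm_univ : forall A B (f g : Hom A B) Z (h : Hom Z A),
      comp f h = comp g h -> exists! u : Hom Z (Eqz f g), comp (eqm f g) u = h;
  (* exponentials: Exp A B is B^A *)
  Exp : Ob -> Ob -> Ob;
  ev : forall A B, Hom (Prod (Exp A B) A) B;
  curry : forall C A B, Hom (Prod C A) B -> Hom C (Exp A B);
  curry_beta : forall C A B (h : Hom (Prod C A) B),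
      comp (ev A B) (pair (comp (curry h) (p1 C A)) (p2 C A)) = h;
  curry_eta : forall C A B (g : Hom C (Exp A B)),
      curry (comp (ev A B) (pair (comp g (p1 C A)) (p2 C A))) = g;
  Omega : Ob;
  tru : Hom One Omega;
  chi : forall A B, Hom A B -> Hom B Omega;
  chi_spec : forall A B (m : Hom A B),
      (forall Z (g h : Hom Z A), comp m g = comp m h -> g = h) ->
      comp (chi m) m = comp tru (bang A) /\
      (forall Z (g : Hom Z B), comp (chi m) g = comp tru (bang Z) ->
         exists! h : Hom Z A, comp m h = g);
  chi_uniq : forall A B (m : Hom A B) (c : Hom B Omega),
      (forall Z (g h : Hom Z A), comp m g = comp m h -> g = h) ->
      comp c m = comp tru (bang A) ->
      (forall Z (g : Hom Z B), comp c g = comp tru (bang Z) ->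
         exists! h : Hom Z A, comp m h = g) ->
      c = chi m
}.

Arguments Hom : clear implicits.
Arguments Ob : clear implicits.
Arguments idm {t} A.
Arguments comp {t A B C} _ _.
Arguments One {t}.
Arguments bang {t} A.
Arguments Prod {t} _ _.
Arguments p1 {t} A B.
Arguments p2 {t} A B.
Arguments pair {t C A B} _ _.
Arguments Eqz {t A B} _ _.
Arguments eqm {t A B} _ _.
Arguments Exp {t} _ _.
Arguments ev {t} A B.
Arguments curry {t C A B} _.
Arguments Omega {t}.
Arguments tru {t}.
Arguments chi {t A B} _.

Unset Implicit Arguments.
Section InternalLanguage.
Variable E : Topos.
Local Notation Ω := (@Omega E).

Definition andO : Hom E (Prod Ω Ω) Ω := chi (pair (@tru E) (@tru E)).
Definition impO : Hom E (Prod Ω Ω) Ω := chi (eqm andO (p1 Ω Ω)).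
Definition eqO (X : Ob E) : Hom E (Prod X X) Ω := chi (pair (idm X) (idm X)).
Definition allO (X : Ob E) : Hom E (Exp X Ω) Ω :=
  chi (curry (comp (@tru E) (bang (Prod One X))) : Hom E One (Exp X Ω)).

(* Formulas in context G are morphisms G -> Ω; terms of type X are G -> X. *)
Definition FAnd {G} (a b : Hom E G Ω) : Hom E G Ω := comp andO (pair a b).
Definition FImp {G} (a b : Hom E G Ω) : Hom E G Ω := comp impO (pair a b).
Definition FEq {G X} (a b : Hom E G X) : Hom E G Ω := comp (eqO X) (pair a b).
Definition FAll {G} (X : Ob E) (phi : Hom E (Prod G X) Ω) : Hom E G Ω :=
  comp (allO X) (curry phi).
Definition FLam {G} (X : Ob E) (phi : Hom E (Prod G X) Ω) : Hom E G (Exp X Ω) :=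
  curry phi.
Definition FApp {G X} (phi : Hom E G (Exp X Ω)) (x : Hom E G X) : Hom E G Ω :=
  comp (ev X Ω) (pair phi x).
(* weakening and the last variable *)
Definition wk {G A B} (t : Hom E G B) : Hom E (Prod G A) B := comp t (p1 G A).
Definition vr {G A} : Hom E (Prod G A) A := p2 G A.

Definition models (phi : Hom E One Ω) : Prop := phi = @tru E.

Definition strong_Lob (circ : Hom E Ω Ω) : Prop :=
  models (FAll Ω (FImp (FImp (comp circ vr) vr) vr)).

Definition contractive (circ : Hom E Ω Ω) {X} (f : Hom E X X) : Prop :=
  models (FAll X (FAll X
    (let x := wk (A := X) (vr (G := One) (A := X)) in
     let y := vr (G := Prod One X) (A := X) in
     FImp (comp circ (FEq x y)) (FEq (comp f x) (comp f y))))).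

Definition non_expansive {X} (f : Hom E X X) : Prop :=
  models (FAll X (FAll X
    (let x := wk (A := X) (vr (G := One) (A := X)) in
     let y := vr (G := Prod One X) (A := X) in
     FImp (FImp (FEq (comp f x) (comp f y)) (FEq x y)) (FEq x y)))).

Definition SubTe {G X} (phi : Hom E G (Exp X Ω)) : Hom E G Ω :=
  FAll X (FAll X
    (let x := wk (A := X) (vr (G := G) (A := X)) in
     let y := vr (G := Prod G X) (A := X) in
     let phi' := wk (A := X) (wk (A := X) phi) in
     FImp (FAnd (FApp phi' x) (FApp phi' y)) (FEq x y))).

Definition Incl {G X} (phi psi : Hom E G (Exp X Ω)) : Hom E G Ω :=
  FAll X (FImp (FApp (wk phi) vr) (FApp (wk psi) vr)).

Definition MaxST {G X} (phi : Hom E G (Exp X Ω)) : Hom E G Ω :=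
  FAnd (SubTe phi)
    (FAll (Exp X Ω)
       (let a := vr (G := G) (A := Exp X Ω) in
        let phi' := wk (A := Exp X Ω) phi in
        FImp (FAnd (SubTe a) (Incl phi' a)) (Incl a phi'))).

Definition fixpred {X} (f : Hom E X X) : Hom E One (Exp X Ω) :=
  FLam X (FEq (vr (G := One) (A := X)) (comp f vr)).

End InternalLanguage.
Arguments strong_Lob {E}.
Arguments contractive {E} circ {X}.
Arguments non_expansive {E X}.
Arguments models {E}.
Arguments MaxST {E G X}.
Arguments fixpred {E X}.

(* Everything is read off externally, via generalized elements (Kripke-Joyal):
   a formula [c : G -> Ω] holds when it factors through [true], and each
   connective then means at every stage [h : Z -> G] what it means
   externally.  Löb induction on the proposition [x ≈ y] proves
   non-expansiveness: at a stage where [⊚(x ≈ y)] holds, contractivity gives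
   [f x = f y], and the premise [f x ≈ f y ⇒ x ≈ y] then gives [x = y].  For the fixed points: two fixed points with
   [f x = f y] are equal, so the fixed-point predicate is subterminal; and if
   [α] is subterminal, contains every fixed point and holds at [x], then at
   any stage where [f x = f (f x)] the element [f x] is a fixed point, hence in
   [α], hence equal to [x]; non-expansiveness then makes [x] a fixed point. *)
From Stdlib Require Import Setoid.

Section Forcing.
Variable E : Topos.
Local Notation Ω := (@Omega E).

Definition holds {G : Ob E} (c : Hom E G Ω) : Prop := c = comp tru (bang G).

Definition mono {A B} (m : Hom E A B) : Prop :=
  forall Z (g h : Hom E Z A), comp m g = comp m h -> g = h.

Lemma comp_bang {A B} (h : Hom E A B) : comp (bang B) h = bang A.
Proof. apply bang_uniq. Qed.

Lemma comp_pair {Z C A B} (a : Hom E C A) (b : Hom E C B) (h : Hom E Z C) :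
  comp (pair a b) h = pair (comp a h) (comp b h).
Proof.
  rewrite <- (pair_uniq (comp (pair a b) h)).
  rewrite !comp_assoc, pair_p1, pair_p2. reflexivity.
Qed.

Lemma pair_inj {C A B} (a c : Hom E C A) (b d : Hom E C B) :
  pair a b = pair c d -> a = c /\ b = d.
Proof.
  intro H. split.
  - rewrite <- (pair_p1 a b), <- (pair_p1 c d), H. reflexivity.
  - rewrite <- (pair_p2 a b), <- (pair_p2 c d), H. reflexivity.
Qed.

Lemma curry_nat {G Z X B} (k : Hom E (Prod G X) B) (h : Hom E Z G) :
  comp (curry k) h = curry (comp k (pair (comp h (p1 Z X)) (p2 Z X))).
Proof.
  rewrite <- (curry_eta (comp (curry k) h)). f_equal.
  pattern k at 2. rewrite <- (curry_beta k).
  rewrite <- !comp_assoc, comp_pair, pair_p2, <- comp_assoc, pair_p1. reflexivity.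
Qed.

Lemma curry_inj {G X B} (k1 k2 : Hom E (Prod G X) B) : curry k1 = curry k2 -> k1 = k2.
Proof. intro H. rewrite <- (curry_beta k1), <- (curry_beta k2), H. reflexivity. Qed.

Lemma mono_from_One {B} (m : Hom E One B) : mono m.
Proof. intros Z g h _. apply bang_uniq. Qed.

Lemma mono_eqm {A B} (f g : Hom E A B) : mono (eqm f g).
Proof.
  intros Z u v H.
  assert (Hfg : comp f (comp (eqm f g) u) = comp g (comp (eqm f g) u)).
  { rewrite !comp_assoc, eqm_comm. reflexivity. }
  destruct (eqm_univ Hfg) as [w [_ Hw]].
  transitivity w; [symmetry|]; apply Hw; auto.
Qed.

Lemma mono_diag X : mono (pair (idm X) (idm X)).
Proof.
  intros Z u v H. rewrite !comp_pair, !comp_idl in H. apply pair_inj in H. tauto.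
Qed.

Lemma holds_comp {G Z} (c : Hom E G Ω) (h : Hom E Z G) : holds c -> holds (comp c h).
Proof. unfold holds. intros ->. rewrite <- comp_assoc, comp_bang. reflexivity. Qed.

Lemma holds_chi {A B Z} (m : Hom E A B) (g : Hom E Z B) :
  mono m -> holds (comp (chi m) g) <-> exists h, comp m h = g.
Proof.
  intros Hm. destruct (chi_spec Hm) as [Hchi Hpb]. unfold holds. split.
  - intro H. destruct (Hpb _ _ H) as [h [Hh _]]. eauto.
  - intros [h <-]. rewrite comp_assoc, Hchi, <- comp_assoc, comp_bang. reflexivity.
Qed.

(* Both maps classify the equalizer of [d] and [true]. *)
Lemma Omega_ext {G} (c d : Hom E G Ω) :
  (forall Z (g : Hom E Z G), holds (comp c g) <-> holds (comp d g)) -> c = d.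
Proof.
  intros H.
  set (m := eqm d (comp tru (bang G))).
  assert (Hdm : holds (comp d m)).
  { unfold holds, m. rewrite eqm_comm, <- comp_assoc, comp_bang. reflexivity. }
  assert (Hchi : forall c', (forall Z (g : Hom E Z G), holds (comp c' g) <-> holds (comp d g)) ->
                            c' = chi m).
  { intros c' Hc'. apply chi_uniq.
    - apply mono_eqm.
    - apply Hc'. exact Hdm.
    - intros Z g Hg. apply Hc' in Hg. unfold holds in Hg.
      apply eqm_univ. rewrite Hg, <- comp_assoc, comp_bang. reflexivity. }
  rewrite (Hchi c H), (Hchi d (fun Z g => iff_refl _)). reflexivity.
Qed.

Lemma holds_FAnd {G} (a b : Hom E G Ω) : holds (FAnd E a b) <-> holds a /\ holds b.
Proof.
  unfold FAnd, andO. rewrite holds_chi by apply mono_from_One. split.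
  - intros [h Hh]. rewrite comp_pair in Hh. apply pair_inj in Hh as [<- <-].
    unfold holds. rewrite (bang_uniq h (bang G)). tauto.
  - intros [Ha Hb]. exists (bang G). rewrite comp_pair. unfold holds in *. congruence.
Qed.

Lemma holds_FEq {G X} (a b : Hom E G X) : holds (FEq E a b) <-> a = b.
Proof.
  unfold FEq, eqO. rewrite holds_chi by apply mono_diag. split.
  - intros [h Hh]. rewrite comp_pair, comp_idl in Hh.
    apply pair_inj in Hh as [<- <-]. reflexivity.
  - intros <-. exists a. rewrite comp_pair, comp_idl. reflexivity.
Qed.

Lemma holds_FAll {G} X (phi : Hom E (Prod G X) Ω) : holds (FAll E X phi) <-> holds phi.
Proof.
  unfold FAll, allO. rewrite holds_chi by apply mono_from_One. split.
  - intros [h Hh]. rewrite curry_nat in Hh. apply curry_inj in Hh. rewrite <- Hh.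
    unfold holds. rewrite <- comp_assoc, comp_bang. reflexivity.
  - intro H. exists (bang G). rewrite curry_nat. f_equal. rewrite H.
    rewrite <- comp_assoc, comp_bang. reflexivity.
Qed.

Lemma FAnd_comp {G Z} (a b : Hom E G Ω) (h : Hom E Z G) :
  comp (FAnd E a b) h = FAnd E (comp a h) (comp b h).
Proof. unfold FAnd. rewrite <- comp_assoc, comp_pair. reflexivity. Qed.

Lemma FImp_comp {G Z} (a b : Hom E G Ω) (h : Hom E Z G) :
  comp (FImp E a b) h = FImp E (comp a h) (comp b h).
Proof. unfold FImp. rewrite <- comp_assoc, comp_pair. reflexivity. Qed.

Lemma FEq_comp {G Z X} (a b : Hom E G X) (h : Hom E Z G) :
  comp (FEq E a b) h = FEq E (comp a h) (comp b h).
Proof. unfold FEq. rewrite <- comp_assoc, comp_pair. reflexivity. Qed.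

Lemma FApp_comp {G Z X} (p : Hom E G (Exp X Ω)) (a : Hom E G X) (h : Hom E Z G) :
  comp (FApp E p a) h = FApp E (comp p h) (comp a h).
Proof. unfold FApp. rewrite <- comp_assoc, comp_pair. reflexivity. Qed.

Lemma FAll_comp {G Z} X (phi : Hom E (Prod G X) Ω) (h : Hom E Z G) :
  comp (FAll E X phi) h = FAll E X (comp phi (pair (comp h (p1 Z X)) (p2 Z X))).
Proof. unfold FAll. rewrite <- comp_assoc, curry_nat. reflexivity. Qed.

Lemma FApp_curry {G Z X} (psi : Hom E (Prod G X) Ω) (g : Hom E Z G) (x : Hom E Z X) :
  FApp E (comp (curry psi) g) x = comp psi (pair g x).
Proof.
  unfold FApp. rewrite <- (curry_beta psi) at 2.
  rewrite <- comp_assoc, comp_pair, <- comp_assoc, pair_p1, pair_p2. reflexivity.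
Qed.

(* [a ⇒ b] is [a ∧ b = a], i.e. the equalizer of [andO] and [p1]. *)
Lemma holds_FImp {G} (a b : Hom E G Ω) :
  holds (FImp E a b) <-> forall Z (h : Hom E Z G), holds (comp a h) -> holds (comp b h).
Proof.
  assert (Himp : holds (FImp E a b) <-> FAnd E a b = a).
  { unfold FImp, impO. rewrite holds_chi by apply mono_eqm. split.
    - intros [h Hh]. rewrite <- (pair_p1 a b) at 2. unfold FAnd.
      rewrite <- Hh, !comp_assoc, eqm_comm. reflexivity.
    - intro H. assert (H' : comp (andO E) (pair a b) = comp (p1 Ω Ω) (pair a b))
        by (rewrite pair_p1; exact H).
      destruct (eqm_univ H') as [u [Hu _]]. eauto. }
  rewrite Himp. split.
  - intros H Z h Ha. rewrite <- H, FAnd_comp in Ha. apply holds_FAnd in Ha. tauto.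
  - intros H. apply Omega_ext. intros Z g. rewrite FAnd_comp, holds_FAnd. split; [tauto|].
    intro Ha. split; auto.
Qed.

Lemma models_holds (phi : Hom E One Ω) : models phi <-> holds phi.
Proof. unfold models, holds. rewrite (bang_uniq (bang One) (idm One)), comp_idr. tauto. Qed.

End Forcing.

Arguments holds {E G}.
Arguments holds_comp {E G Z}.

Lemma comp_assoc_r (E : Topos) (A B C D : Ob E)
  (h : Hom E C D) (g : Hom E B C) (f : Hom E A B) :
  comp (comp h g) f = comp h (comp g f).
Proof. symmetry. apply comp_assoc. Qed.

#[local] Hint Rewrite comp_assoc_r comp_pair pair_p1 pair_p2 comp_idl comp_idr comp_bang
  FAnd_comp FImp_comp FEq_comp FApp_comp FAll_comp FApp_curry : subst.

Ltac simpl_subst :=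
  unfold MaxST, SubTe, Incl, fixpred, FLam, wk, vr in *; autorewrite with subst in *.

Section External.
Variable E : Topos.
Variable circ : Hom E (@Omega E) (@Omega E).
Variable X : Ob E.
Variable f : Hom E X X.

Definition non_expansive_ext : Prop :=
  forall Z (x y : Hom E Z X),
    (forall W (k : Hom E W Z), comp f (comp x k) = comp f (comp y k) -> comp x k = comp y k) ->
    x = y.

Lemma strong_Lob_induction : strong_Lob circ -> forall Z (p : Hom E Z Omega),
  (forall W (k : Hom E W Z), holds (comp circ (comp p k)) -> holds (comp p k)) -> holds p.
Proof.
  unfold strong_Lob. rewrite models_holds, holds_FAll. intros HL Z p Hp.
  apply (holds_comp _ (pair (bang Z) p)) in HL. simpl_subst.
  rewrite holds_FImp in HL. specialize (HL Z (idm Z)). simpl_subst. apply HL.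
  rewrite holds_FImp. intros W k. simpl_subst. apply Hp.
Qed.

Lemma contractive_eq : contractive circ f -> forall Z (x y : Hom E Z X),
  holds (comp circ (FEq E x y)) -> comp f x = comp f y.
Proof.
  unfold contractive. rewrite models_holds, !holds_FAll. intros HC Z x y Hxy.
  apply (holds_comp _ (pair (pair (bang Z) x) y)) in HC. simpl_subst.
  rewrite holds_FImp in HC. specialize (HC Z (idm Z)). simpl_subst.
  apply holds_FEq. apply HC. exact Hxy.
Qed.

Lemma non_expansive_iff_ext : non_expansive f <-> non_expansive_ext.
Proof.
  unfold non_expansive. rewrite models_holds, !holds_FAll. split.
  - intros Hne Z x y Hxy.
    apply (holds_comp _ (pair (pair (bang Z) x) y)) in Hne. simpl_subst.
    rewrite holds_FImp in Hne. specialize (Hne Z (idm Z)). simpl_subst.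
    apply holds_FEq. apply Hne.
    rewrite holds_FImp. intros W k. simpl_subst. rewrite !holds_FEq. apply Hxy.
  - intros Hne. simpl_subst. rewrite holds_FImp. intros Z h Hh. simpl_subst.
    rewrite holds_FEq. apply Hne. intros W k Hk.
    rewrite holds_FImp in Hh. specialize (Hh W k). simpl_subst.
    rewrite !holds_FEq in Hh. apply Hh. exact Hk.
Qed.

Lemma contractive_non_expansive :
  strong_Lob circ -> contractive circ f -> non_expansive f.
Proof.
  intros HL HC. apply non_expansive_iff_ext. intros Z x y Hxy.
  apply holds_FEq. apply (strong_Lob_induction HL). intros W k Hk. simpl_subst.
  apply holds_FEq. apply Hxy. apply (contractive_eq HC). exact Hk.
Qed.

End External.

Arguments non_expansive_iff_ext {E X f}.
Arguments contractive_non_expansive {E circ X f}.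

Section Predicates.
Variable E : Topos.
Local Notation Ω := (@Omega E).

Lemma SubTe_comp {G Z X} (phi : Hom E G (Exp X Ω)) (h : Hom E Z G) :
  comp (SubTe E phi) h = SubTe E (comp phi h).
Proof. simpl_subst. reflexivity. Qed.

Lemma Incl_comp {G Z X} (phi psi : Hom E G (Exp X Ω)) (h : Hom E Z G) :
  comp (Incl E phi psi) h = Incl E (comp phi h) (comp psi h).
Proof. simpl_subst. reflexivity. Qed.

Lemma holds_Incl {G X} (phi psi : Hom E G (Exp X Ω)) :
  holds (Incl E phi psi) <->
  forall Z (g : Hom E Z G) (x : Hom E Z X),
    holds (FApp E (comp phi g) x) -> holds (FApp E (comp psi g) x).
Proof.
  unfold Incl. rewrite holds_FAll, holds_FImp. split.
  - intros H Z g x. specialize (H Z (pair g x)). simpl_subst. exact H.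
  - intros H Z h. simpl_subst. apply H.
Qed.

Lemma holds_SubTe {G X} (phi : Hom E G (Exp X Ω)) :
  holds (SubTe E phi) <->
  forall Z (g : Hom E Z G) (x y : Hom E Z X),
    holds (FApp E (comp phi g) x) -> holds (FApp E (comp phi g) y) -> x = y.
Proof.
  unfold SubTe. rewrite !holds_FAll, holds_FImp. split.
  - intros H Z g x y Hx Hy. specialize (H Z (pair (pair g x) y)). simpl_subst.
    apply holds_FEq, H, holds_FAnd. tauto.
  - intros H Z h. simpl_subst. rewrite holds_FAnd, holds_FEq. intros [Hx Hy].
    exact (H _ _ _ _ Hx Hy).
Qed.

Lemma holds_fixpred {Z X} (f : Hom E X X) (g : Hom E Z One) (x : Hom E Z X) :
  holds (FApp E (comp (fixpred f) g) x) <-> x = comp f x.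
Proof. simpl_subst. apply holds_FEq. Qed.

End Predicates.

Lemma non_expansive_MaxST_fixpred {E : Topos} {X : Ob E} (f : Hom E X X) :
  non_expansive f -> models (MaxST (fixpred f)).
Proof.
  rewrite non_expansive_iff_ext. intros Hne.
  rewrite models_holds. unfold MaxST. rewrite holds_FAnd, holds_FAll, holds_FImp. split.
  - apply holds_SubTe. intros Z g x y. rewrite !holds_fixpred. intros Hx Hy.
    apply Hne. intros W k Hk.
    rewrite Hx, Hy, !comp_assoc_r. exact Hk.
  - intros Z h. unfold wk, vr.
    rewrite FAnd_comp, SubTe_comp, !Incl_comp, holds_FAnd, holds_SubTe, !holds_Incl.
    set (alpha := comp (p2 _ _) h). intros [Hsub Hincl] W g x Hx.
    rewrite !comp_assoc_r, holds_fixpred.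
    apply Hne. intros V k Hk. rewrite comp_assoc_r in Hk.
    apply (Hsub V (comp g k)).
    + apply (holds_comp _ k) in Hx. rewrite FApp_comp, comp_assoc_r in Hx. exact Hx.
    + apply Hincl. rewrite !comp_assoc_r, holds_fixpred. exact Hk.
Qed.

Theorem corollary5p11 (E : Topos) (circ : Hom E (@Omega E) (@Omega E))
  (X : Ob E) (f : Hom E X X) :
  strong_Lob circ -> contractive circ f ->
  non_expansive f /\ models (MaxST (fixpred f)).
Proof.
  intros HL HC.
  pose proof (contractive_non_expansive HL HC) as Hne.
  split; [exact Hne | exact (non_expansive_MaxST_fixpred f Hne)].
Qed.
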